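(* Let $g\ge 1$ be an integer and let $t\in\mathbb{C}$ with $t\neq 0$ and $t\neq -1$. Define the polynomials \[j(x)=\sum_{i=0}^{g-1}\binom{2g-1}{2i}(x+1)^i,\qquad k(x)=\sum_{i=0}^{g-1}\binom{2g-1}{2i+1}(x+1)^i .\] Let $C_t$ be the curve $y^2=x(x+1)\bigl(x^{2g-1}+t\,j(x)^2\bigr)$, which is a curve of genus $g$, and let $E_t$ be the elliptic curve $y^2=x(x+1)(x+t)$. Then the map $f:C_t\to E_t$ given by \[(x,y)\mapsto\bigl(f_1(x),\,f_2(x)\,y\bigr),\qquad f_1(x)=\frac{x^{2g-1}}{j(x)^2},\qquad f_2(x)=\frac{x^{g-1}\,k(x)}{j(x)^3},\] is a well-defined morphism of degree $2g-1$ which is totally ramified above the point $(0,0)\in E_t$ and unramified everywhere else.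
   Context: Curves are over $\mathbb{C}$; an affine equation such as $y^2=h(x)$ denotes the smooth projective curve (hyperelliptic, respectively elliptic) it defines, and a morphism given by a rational formula on the affine model means its extension to these smooth projective models. ''Totally ramified above a point $P$'' means the preimage of $P$ consists of a single point (with ramification index equal to the degree). *)

(* the complex numbers are R[i] (mathcomp-real-closed's
   'complex') for an arbitrary R : realType (every realType is isomorphic to
   the reals, so R[i] is isomorphic to C). *)
From mathcomp Require Import all_boot all_algebra all_field.
From mathcomp Require Import complex.
From mathcomp Require Import reals.
Set Implicit Arguments. Unset Strict Implicit. Unset Printing Implicit Defensive.
Import GRing.Theory Num.Theory.
Local Open Scope ring_scope.

Section Defs.
Variable F : fieldType.

(* Points of the smooth projective model of  y^2 = h(x)  when h is squarefree
   of ODD degree: the affine solutions (Some (x,y)) plus the unique point at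
   infinity (None). *)
Definition pt := option (F * F).

Definition on_hyp (h : {poly F}) (P : pt) : Prop :=
  match P with
  | None => True
  | Some (x, y) => y ^+ 2 = h.[x]
  end.

Definition fiber_card (onC : pt -> Prop) (phi : pt -> pt) (Q : pt) (n : nat)
  : Prop :=
  exists s : seq pt, [/\ uniq s, size s = n &
     forall P, (P \in s) <-> (onC P /\ phi P = Q)].

(* phi : C -> E has degree d: all but finitely many points of E have
   exactly d preimages (over C, characteristic 0). *)
Definition has_degree (onC onE : pt -> Prop) (phi : pt -> pt) (d : nat)
  : Prop :=
  exists S : seq pt, forall Q, onE Q -> Q \notin S -> fiber_card onC phi Q d.

Definition totally_ramified_above (onC : pt -> Prop) (phi : pt -> pt) (Q : pt)
  : Prop := fiber_card onC phi Q 1.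

Definition unramified_above (onC : pt -> Prop) (phi : pt -> pt) (d : nat)
  (Q : pt) : Prop := fiber_card onC phi Q d.

Definition jpol (g : nat) : {poly F} :=
  \sum_(i < g) (('C(2 * g - 1, 2 * i))%:R *: ('X + 1) ^+ i).
Definition kpol (g : nat) : {poly F} :=
  \sum_(i < g) (('C(2 * g - 1, 2 * i + 1))%:R *: ('X + 1) ^+ i).

Definition hC (g : nat) (t : F) : {poly F} :=
  'X * ('X + 1) * ('X ^+ (2 * g - 1) + t%:P * jpol g ^+ 2).
Definition hE (t : F) : {poly F} := 'X * ('X + 1) * ('X + t%:P).

(* The map f on points of the smooth projective models, i.e. the extension
   of (x,y) |-> (x^(2g-1)/j(x)^2, x^(g-1) k(x)/j(x)^3 * y):
   - at affine points with j(x) <> 0, it is given by the formula;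
   - at affine points with j(x) = 0, f_1 has a pole (the numerator x^(2g-1)
     does not vanish there since j(0) = 2^(2g-2) <> 0), so the image is the
     point at infinity of E;
   - the point at infinity of C goes to infinity, since f_1 has a pole there
     (deg x^(2g-1) = 2g-1 > 2g-2 = deg j^2). *)
Definition fmap (g : nat) (P : pt) : pt :=
  match P with
  | None => None
  | Some (x, y) =>
      let jx := (jpol g).[x] in
      if jx == 0 then None
      else Some (x ^+ (2 * g - 1) / jx ^+ 2,
                 x ^+ (g - 1) * (kpol g).[x] / jx ^+ 3 * y)
  end.

End Defs.

From mathcomp Require Import all_boot all_algebra all_field.
From mathcomp Require Import complex.
From mathcomp Require Import reals.
From mathcomp Require Import ring zify.
Import GRing.Theory Num.Theory.
Local Open Scope ring_scope.

(* Write n = 2g - 1. Substituting x = u^2 - 1 turns j and k into the even and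
   odd parts of (1 + u)^n, i.e. (1 +- u)^n = j(x) +- u k(x). Multiplying the two
   gives x^n + j(x)^2 = (x + 1) k(x)^2, hence f1 + 1 = (x + 1) k^2 / j^2 and
   f2^2 h_C(x) = h_E(f1(x)): f maps C_t to E_t. Differentiating gives
   n j - 2 x j' = n k and a companion identity, which show that j, k and
   x^n - a j^2 (a <> 0, -1) have simple roots. The fibres then have n points:
   above an affine (a, b) with a <> 0, -1 one point over each root of
   x^n - a j^2; above (-1, 0) the point (-1, 0) and two points over each of the
   g - 1 roots of k; above infinity, infinity and two points over each root
   of j; whereas above (0, 0) lies only (0, 0). *)

Lemma sum_ord_even_odd (V : nmodType) (f : nat -> V) (g : nat) :
  \sum_(i < 2 * g) f i = \sum_(i < g) f (2 * i)%N + \sum_(i < g) f (2 * i).+1.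
Proof.
elim: g => [|g IHg]; first by rewrite !big_ord0 addr0.
rewrite (_ : 2 * g.+1 = (2 * g).+2)%N ?mulnS // !big_ord_recr /= IHg.
by rewrite -!addrA; congr (_ + _); rewrite addrCA.
Qed.

Section PolyX1.
Variable F : numDomainType.
Implicit Types (c : nat -> nat) (g : nat).

Definition poly_X1 c g : {poly F} := \sum_(i < g) (c i)%:R *: ('X + 1) ^+ i.

Lemma size_X1 : size ('X + 1 : {poly F}) = 2%N.
Proof. by rewrite -polyC1 size_XaddC. Qed.

Lemma size_exp_X1 g : size (('X + 1 : {poly F}) ^+ g) = g.+1.
Proof.
rewrite polySpred ?expf_neq0 -?size_poly_gt0 ?size_X1 // size_exp size_X1.
by rewrite mul1n.
Qed.

Lemma size_poly_X1_leq c g : (size (poly_X1 c g) <= g)%N.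
Proof.
apply: (big_ind (fun p : {poly F} => size p <= g)%N) => [|p r|i _].
- by rewrite size_poly0.
- by move=> sp sr; rewrite (leq_trans (size_polyD _ _)) // geq_max sp sr.
- by rewrite (leq_trans (size_scale_leq _ _)) // size_exp_X1.
Qed.

Lemma size_poly_X1 c g : c g != 0%N -> size (poly_X1 c g.+1) = g.+1.
Proof.
move=> cg0; rewrite /poly_X1 big_ord_recr /= addrC.
have size_top : size ((c g)%:R *: ('X + 1) ^+ g : {poly F}) = g.+1.
  by rewrite size_scale ?size_exp_X1 ?pnatr_eq0.
by rewrite size_polyDl size_top // ltnS size_poly_X1_leq.
Qed.

Lemma horner_poly_X1_N1 c g : (poly_X1 c g.+1).[-1] = (c 0%N)%:R.
Proof.
rewrite /poly_X1 horner_sum big_ord_recl big1 => [|i _]; last first.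
  by rewrite hornerZ horner_exp !hornerE addNr expr0n mulr0.
by rewrite hornerZ expr0 hornerC mulr1 addr0.
Qed.

Lemma horner_poly_X1_0 c g : (poly_X1 c g).[0] = (\sum_(i < g) c i)%:R.
Proof.
rewrite /poly_X1 horner_sum natr_sum; apply: eq_bigr => i _.
by rewrite hornerZ horner_exp !hornerE expr1n mulr1.
Qed.

Lemma poly_X1_0_neq0 c g : (0 < c 0%N)%N -> (poly_X1 c g.+1).[0] != 0.
Proof. by move=> c0; rewrite horner_poly_X1_0 pnatr_eq0 big_ord_recl -lt0n ltn_addr. Qed.

End PolyX1.

Section JpolKpol.
Variable F : numFieldType.
Variable m : nat.
Local Notation n := (2 * m).+1.
Local Notation j := (jpol F m.+1).
Local Notation k := (kpol F m.+1).
Local Notation q := ('X ^+ 2 - 1 : {poly F}).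

Lemma jpolE : j = poly_X1 F (fun i => 'C(n, 2 * i)) m.+1.
Proof. by rewrite /jpol (_ : 2 * m.+1 - 1 = n)%N //; lia. Qed.

Lemma kpolE : k = poly_X1 F (fun i => 'C(n, 2 * i + 1)) m.+1.
Proof. by rewrite /kpol (_ : 2 * m.+1 - 1 = n)%N //; lia. Qed.

Lemma size_jpol : size j = m.+1.
Proof. by rewrite jpolE size_poly_X1 // binSn. Qed.

Lemma size_kpol : size k = m.+1.
Proof. by rewrite kpolE size_poly_X1 // addn1 binn. Qed.

Lemma horner_jpol_N1 : j.[-1] = 1.
Proof. by rewrite jpolE horner_poly_X1_N1 muln0 bin0. Qed.

Lemma horner_kpol_N1 : k.[-1] = n%:R.
Proof. by rewrite kpolE horner_poly_X1_N1 muln0 bin1. Qed.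

Lemma horner_jpol0_neq0 : j.[0] != 0.
Proof. by rewrite jpolE poly_X1_0_neq0 // muln0 bin0. Qed.

Lemma horner_kpol0_neq0 : k.[0] != 0.
Proof. by rewrite kpolE poly_X1_0_neq0 // muln0 bin1. Qed.

Lemma comp_jpol : j \Po q = \sum_(i < m.+1) 'X ^+ (2 * i) *+ 'C(n, 2 * i).
Proof.
rewrite jpolE rmorph_sum; apply: eq_bigr => i _.
rewrite /= comp_polyZ rmorphXn /= comp_polyD comp_polyX comp_polyC subrK.
by rewrite -exprM scaler_nat.
Qed.

Lemma comp_kpol : k \Po q = \sum_(i < m.+1) 'X ^+ (2 * i) *+ 'C(n, (2 * i).+1).
Proof.
rewrite kpolE rmorph_sum; apply: eq_bigr => i _.
rewrite /= comp_polyZ rmorphXn /= comp_polyD comp_polyX comp_polyC subrK.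
by rewrite -exprM scaler_nat addn1.
Qed.

Lemma size_q : size q = 3%N.
Proof. by rewrite -polyC1 size_XnsubC. Qed.

Lemma comp_q_inj (p r : {poly F}) : p \Po q = r \Po q -> p = r.
Proof.
move=> e; apply/eqP; rewrite -subr_eq0 -(comp_poly_eq0 _ (q := q)) ?size_q //.
by rewrite comp_polyB e subrr.
Qed.

Lemma exprX1n_even_odd : ('X + 1) ^+ n = j \Po q + 'X * (k \Po q).
Proof.
rewrite comp_jpol comp_kpol exprD1n (_ : n.+1 = 2 * m.+1)%N; last by lia.
rewrite (@sum_ord_even_odd _ (fun i => 'X ^+ i *+ 'C(n, i))) mulr_sumr; congr (_ + _).
by apply: eq_bigr => i _; rewrite exprS mulrnAr.
Qed.

Lemma exprNX1n_even_odd : (- 'X + 1) ^+ n = j \Po q - 'X * (k \Po q).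
Proof.
rewrite comp_jpol comp_kpol exprD1n (_ : n.+1 = 2 * m.+1)%N; last by lia.
rewrite (@sum_ord_even_odd _ (fun i => (- 'X) ^+ i *+ 'C(n, i))) mulr_sumr -sumrN.
congr (_ + _); apply: eq_bigr => i _; first by rewrite exprM sqrrN -exprM.
by rewrite exprS exprM sqrrN -exprM mulNr mulrnAr mulNrn.
Qed.

Lemma exprN_odd (x : {poly F}) : (- x) ^+ n = - x ^+ n.
Proof. by rewrite exprNn -signr_odd /= oddM /= expr1 mulN1r. Qed.

Lemma norm_jpol_kpol : j ^+ 2 - ('X + 1) * k ^+ 2 = - 'X ^+ n.
Proof.
apply: comp_q_inj.
rewrite !(rmorphB, rmorphD, rmorphM, rmorphXn, rmorphN) /= comp_polyX comp_polyC subrK.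
have norm_comp : (j \Po q + 'X * (k \Po q)) * (j \Po q - 'X * (k \Po q)) = - q ^+ n.
  by rewrite -exprX1n_even_odd -exprNX1n_even_odd -exprMn -exprN_odd; congr (_ ^+ _); ring.
by rewrite -norm_comp; ring.
Qed.

Lemma two_X_neq0 : (2%:R * 'X : {poly F}) != 0.
Proof. by rewrite mulf_neq0 ?polyX_eq0 // -polyC_natr polyC_eq0 pnatr_eq0. Qed.

Lemma deriv_q : q^`() = 2%:R * 'X.
Proof. by rewrite derivB derivXn derivC subr0 expr1 mulr_natl. Qed.

Lemma deriv_exprX1n :
  ('X + 1) * ((j \Po q)^`() + ('X * (k \Po q))^`())
  = n%:R * (j \Po q + 'X * (k \Po q)).
Proof.
rewrite -derivD -exprX1n_even_odd deriv_exp derivD derivX derivC addr0 mul1r.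
by rewrite mulrnAr -exprS mulr_natl.
Qed.

Lemma deriv_exprNX1n :
  (- 'X + 1) * ((j \Po q)^`() - ('X * (k \Po q))^`())
  = - (n%:R * (j \Po q - 'X * (k \Po q))).
Proof.
rewrite -derivB -exprNX1n_even_odd deriv_exp derivD derivN derivX derivC addr0.
by rewrite mulN1r mulNrn mulrN mulrnAr -exprS mulr_natl.
Qed.

Lemma jpol_deriv : n%:R * j - 2%:R * 'X * j^`() = n%:R * k.
Proof.
apply: comp_q_inj; rewrite !(rmorph_nat, rmorphB, rmorphM) /= comp_polyX.
have dA := deriv_exprX1n; have dB := deriv_exprNX1n.
have dE : (j \Po q)^`() = (j^`() \Po q) * (2%:R * 'X) by rewrite deriv_comp deriv_q.
rewrite dE in dA dB.
set E := j \Po q in dA dB *; set O := k \Po q in dA dB *.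
set Dj := j^`() \Po q in dA dB *; set DXO := ('X * O : {poly F})^`() in dA dB.
apply/eqP; rewrite -subr_eq0; apply/eqP; apply: (mulfI two_X_neq0); rewrite mulr0.
transitivity (('X + 1) * ((- 'X + 1) * (Dj * (2%:R * 'X) - DXO) + n%:R * (E - 'X * O))
  - ('X - 1) * (('X + 1) * (Dj * (2%:R * 'X) + DXO) - n%:R * (E + 'X * O))); first by ring.
by rewrite dA dB addNr subrr; ring.
Qed.

Lemma kpol_deriv :
  n%:R * j = ('X + 1) * (n%:R * k - 2%:R * 'X * k^`()) - 'X * k.
Proof.
apply: comp_q_inj.
rewrite !(rmorph_nat, rmorphB, rmorphD, rmorphM) /= comp_polyX rmorph1 subrK.
have dA := deriv_exprX1n; have dB := deriv_exprNX1n.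
have dXO : ('X * (k \Po q))^`() = k \Po q + 'X * ((k^`() \Po q) * (2%:R * 'X)).
  by rewrite derivM derivX mul1r deriv_comp deriv_q.
set E := j \Po q in dA dB *; set O := k \Po q in dA dB dXO *.
set Dk := k^`() \Po q in dXO *; set DXO := ('X * O : {poly F})^`() in dA dB dXO.
set DE := E^`() in dA dB.
apply/eqP; rewrite -subr_eq0; apply/eqP; apply: (mulfI two_X_neq0); rewrite mulr0.
transitivity ('X * (('X - 1) * (('X + 1) * (DE + DXO) - n%:R * (E + 'X * O))
  + ('X + 1) * ((- 'X + 1) * (DE - DXO) + n%:R * (E - 'X * O)))
  - 2%:R * 'X * ('X ^+ 2 - 1) * (DXO - (O + 'X * (Dk * (2%:R * 'X))))); first by ring.
by rewrite dA dB dXO addNr !subrr; ring.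
Qed.

Lemma horner_norm_jpol_kpol x : x ^+ n + j.[x] ^+ 2 = (x + 1) * k.[x] ^+ 2.
Proof.
have := congr1 (horner^~ x) norm_jpol_kpol; rewrite /= !hornerE => e.
by apply/eqP; rewrite -subr_eq0 -addrA e addrN.
Qed.

Lemma horner_jpol_deriv x : n%:R * j.[x] - 2%:R * x * j^`().[x] = n%:R * k.[x].
Proof. by have := congr1 (horner^~ x) jpol_deriv; rewrite /= -!polyC_natr !hornerE. Qed.

Lemma horner_kpol_deriv x :
  n%:R * j.[x] = (x + 1) * (n%:R * k.[x] - 2%:R * x * k^`().[x]) - x * k.[x].
Proof. by have := congr1 (horner^~ x) kpol_deriv; rewrite /= -!polyC_natr !hornerE. Qed.

Lemma jpol_kpol_no_common_root x : j.[x] = 0 -> k.[x] != 0.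
Proof.
move=> jx0; apply/eqP => kx0; have := horner_norm_jpol_kpol x.
rewrite jx0 kx0 expr0n mulr0 addr0 => /eqP; rewrite expf_eq0 /= => /eqP x0.
by move: horner_jpol0_neq0; rewrite -{1}x0 jx0 eqxx.
Qed.

Lemma kpol_root_facts {x} : k.[x] = 0 ->
  [/\ x != 0, x != -1, j.[x] != 0 & x ^+ n = - j.[x] ^+ 2].
Proof.
move=> kx0; split.
- by apply/eqP => x0; move: horner_kpol0_neq0; rewrite -{1}x0 kx0 eqxx.
- by apply/eqP => x1; move: kx0; rewrite x1 horner_kpol_N1; apply/eqP; rewrite pnatr_eq0.
- by apply/eqP => /jpol_kpol_no_common_root; rewrite kx0 eqxx.
- by apply/eqP; rewrite -addr_eq0 horner_norm_jpol_kpol kx0 expr0n mulr0.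
Qed.

End JpolKpol.

Lemma simple_roots_separable (F : closedFieldType) (p : {poly F}) :
  (forall x, root p x -> p^`().[x] != 0) -> separable_poly p.
Proof.
move=> simple; rewrite unlock coprimep_def.
apply/negPn/negP => /closed_rootP [x]; rewrite root_gcd => /andP [px p'x].
by move: (simple x px); rewrite -/(root _ _) p'x.
Qed.

Lemma separable_uniq_roots {F : closedFieldType} {p : {poly F}} :
  separable_poly p ->
  exists rs : seq F, [/\ uniq rs, size rs = (size p).-1 & forall x, root p x = (x \in rs)].
Proof.
move=> sep_p; have lc_neq0 : lead_coef p != 0.
  by rewrite lead_coef_eq0 (separable_poly_neq0 sep_p).
have [rs def_p] := closed_field_poly_normal p.
exists rs; split.
- by rewrite -separable_prod_XsubC -(eqp_separable (eqp_scale _ lc_neq0)) -def_p.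
- by rewrite def_p size_scale // size_prod_XsubC.
- by move=> x; rewrite def_p rootZ // root_prod_XsubC.
Qed.

Section RootsJK.
Variables (F : numClosedFieldType) (m : nat).
Local Notation j := (jpol F m.+1).
Local Notation k := (kpol F m.+1).

Lemma separable_jpol : separable_poly j.
Proof.
apply: simple_roots_separable => x /eqP jx0; apply/eqP => j'x0.
have := horner_jpol_deriv F m x; rewrite jx0 j'x0 !mulr0 subr0 => /esym/eqP.
rewrite mulf_eq0 pnatr_eq0 /=; exact/negP/jpol_kpol_no_common_root.
Qed.

Lemma separable_kpol : separable_poly k.
Proof.
apply: simple_roots_separable => x /eqP kx0; apply/eqP => k'x0.
have := horner_kpol_deriv F m x; rewrite kx0 k'x0 !mulr0 !subr0 mulr0 => /eqP.
rewrite mulf_eq0 pnatr_eq0 /= => /eqP jx0.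
by move/jpol_kpol_no_common_root: jx0; rewrite kx0 eqxx.
Qed.

End RootsJK.

Section Fibers.
Variables (F : numFieldType) (onC : pt F -> Prop) (phi : pt F -> pt F) (Q : pt F).

Lemma fiber_card_graph (rs : seq F) (h : F -> F) : uniq rs ->
  (forall P, onC P /\ phi P = Q <-> exists2 x, x \in rs & P = Some (x, h x)) ->
  fiber_card onC phi Q (size rs).
Proof.
move=> uniq_rs fiberE; exists [seq Some (x, h x) | x <- rs]; split.
- by rewrite map_inj_uniq // => x y [].
- by rewrite size_map.
- by move=> P; rewrite fiberE; split => [/mapP [x xs ->]|[x xs ->]]; [exists x | apply: map_f].
Qed.

Lemma fiber_card_pairs (P0 : pt F) (rs : seq F) (h : F -> F) : uniq rs ->
  (forall x, x \in rs -> h x != 0) ->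
  (forall x, x \in rs -> P0 <> Some (x, h x) /\ P0 <> Some (x, - h x)) ->
  (forall P, onC P /\ phi P = Q <->
     P = P0 \/ exists2 x, x \in rs & P = Some (x, h x) \/ P = Some (x, - h x)) ->
  fiber_card onC phi Q (1 + 2 * size rs).
Proof.
move=> uniq_rs h_neq0 P0_new fiberE.
have h_neqN x : x \in rs -> h x != - h x.
  move=> xs; apply: contra (h_neq0 x xs) => /eqP hxN.
  have : h x *+ 2 == 0 by rewrite mulr2n {1}hxN addNr.
  by rewrite mulrn_eq0.
exists (P0 :: [seq Some (x, h x) | x <- rs] ++ [seq Some (x, - h x) | x <- rs]); split.
- rewrite /= cat_uniq !map_inj_uniq ?uniq_rs //= ?andbT; try by move=> x y [].
  apply/andP; split.
  + rewrite mem_cat negb_or.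
    by apply/andP; split; apply/negP => /mapP [x xs e]; case: (P0_new x xs); rewrite e.
  + apply/hasPn => P /mapP [x xs ->]; apply/negP => /mapP [y ys [e1 e2]].
    by subst y; move: (h_neqN x xs); rewrite e2 eqxx.
- by rewrite /= size_cat !size_map; lia.
- move=> P; rewrite fiberE inE mem_cat; split.
  + case/orP => [/eqP ->|/orP [] /mapP [x xs ->]]; first by left.
    * by right; exists x => //; left.
    * by right; exists x => //; right.
  + case=> [->|[x xs [->|->]]]; first by rewrite eqxx.
    * by rewrite map_f ?orbT.
    * by apply/orP; right; apply/orP; right; apply: map_f.
Qed.

End Fibers.

Section Curve.
Variables (F : numClosedFieldType) (m : nat) (t : F).
Hypotheses (t_neq0 : t != 0) (t_neq1 : t != 1).
Local Notation n := (2 * m).+1.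
Local Notation j := (jpol F m.+1).
Local Notation k := (kpol F m.+1).
Local Notation onC := (on_hyp (hC m.+1 t)).
Local Notation onE := (on_hyp (hE t)).

Definition f1 (x : F) := x ^+ n / j.[x] ^+ 2.
Definition f2 (x : F) := x ^+ m * k.[x] / j.[x] ^+ 3.

Definition fiber_poly (a : F) : {poly F} := 'X ^+ n - a%:P * j ^+ 2.

Lemma hCE : hC m.+1 t = 'X * ('X + 1) * ('X ^+ n + t%:P * j ^+ 2).
Proof. by rewrite /hC (_ : 2 * m.+1 - 1 = n)%N //; lia. Qed.

Lemma horner_hC x : (hC m.+1 t).[x] = x * (x + 1) * (x ^+ n + t * j.[x] ^+ 2).
Proof. by rewrite hCE !hornerE. Qed.

Lemma horner_hE x : (hE t).[x] = x * (x + 1) * (x + t).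
Proof. by rewrite /hE !hornerE. Qed.

Lemma fmap_Some x y :
  fmap m.+1 (Some (x, y)) = if j.[x] == 0 then None else Some (f1 x, f2 x * y).
Proof. by rewrite /fmap /f1 /f2 (_ : 2 * m.+1 - 1 = n)%N ?subn1 //; lia. Qed.

Lemma f2_sqr_hC {x} : j.[x] != 0 -> f2 x ^+ 2 * (hC m.+1 t).[x] = (hE t).[f1 x].
Proof.
move=> jx_neq0; have f1_add1 : f1 x + 1 = (x + 1) * k.[x] ^+ 2 / j.[x] ^+ 2.
  by rewrite -horner_norm_jpol_kpol /f1; field.
have xn : x ^+ n = x * (x ^+ m) ^+ 2 by rewrite exprS -exprM mulnC.
by rewrite horner_hE horner_hC f1_add1 /f1 /f2 !xn; field.
Qed.

Lemma fmap_on_hyp P : onC P -> onE (fmap m.+1 P).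
Proof.
case: P => [[x y]|] // Py; rewrite fmap_Some; case: ifP => // /negbT jx_neq0.
by rewrite /= exprMn Py f2_sqr_hC.
Qed.

Lemma size_fiber_poly a : size (fiber_poly a) = n.+1.
Proof.
rewrite /fiber_poly size_polyDl size_polyXn // size_polyN mul_polyC.
rewrite (leq_ltn_trans (size_scale_leq _ _)) // (leq_ltn_trans (size_poly_exp_leq _ _)) //.
by rewrite size_jpol; lia.
Qed.

Lemma root_fiber_poly a x : root (fiber_poly a) x = (x ^+ n == a * j.[x] ^+ 2).
Proof. by rewrite /root /fiber_poly !hornerE subr_eq0. Qed.

Lemma fiber_poly_root_jpol_neq0 {a x} : a != 0 -> root (fiber_poly a) x -> j.[x] != 0.
Proof.
move=> a_neq0; rewrite root_fiber_poly => /eqP xn; apply/eqP => jx0.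
move: xn; rewrite jx0 expr0n mulr0 => /eqP; rewrite expf_eq0 /= => /eqP x0.
by move: (horner_jpol0_neq0 F m); rewrite -{1}x0 jx0 eqxx.
Qed.

Lemma f1_fiber_poly_root {a x} : a != 0 -> root (fiber_poly a) x -> f1 x = a.
Proof.
move=> a_neq0 ax; have jx_neq0 := fiber_poly_root_jpol_neq0 a_neq0 ax.
by move: ax; rewrite root_fiber_poly /f1 => /eqP ->; rewrite mulfK ?expf_neq0.
Qed.

(* At a multiple root, x * (fiber_poly a)^`() = a j (n j - 2 x j') = n a j k
   forces k(x) = 0, and then x^n + j(x)^2 = 0 forces a = -1. *)
Lemma separable_fiber_poly {a} : a != 0 -> a != -1 -> separable_poly (fiber_poly a).
Proof.
move=> a_neq0 a_neqN1; apply: simple_roots_separable => x ax.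
have jx_neq0 := fiber_poly_root_jpol_neq0 a_neq0 ax.
move: ax; rewrite root_fiber_poly => /eqP xn; apply/eqP => deriv0.
have x_deriv : x * (fiber_poly a)^`().[x] = a * j.[x] * (n%:R * k.[x]).
  rewrite -horner_jpol_deriv /fiber_poly !derivE !hornerE hornerMn hornerXn.
  transitivity (n%:R * (x * x ^+ (2 * m) - a * j.[x] ^+ 2)
                + a * j.[x] * (n%:R * j.[x] - 2%:R * x * j^`().[x])); first by ring.
  by rewrite -exprS xn subrr mulr0 add0r.
move: x_deriv; rewrite deriv0 mulr0 => /esym/eqP.
rewrite !mulf_eq0 (negbTE a_neq0) (negbTE jx_neq0) pnatr_eq0 /= => /eqP kx0.
move: (horner_norm_jpol_kpol F m x); rewrite kx0 expr0n mulr0 xn => /eqP.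
rewrite -{2}[j.[x] ^+ 2]mul1r -mulrDl mulf_eq0 expf_eq0 (negbTE jx_neq0) andbF orbF.
by rewrite addr_eq0 (negbTE a_neqN1).
Qed.

Lemma fiber_card_generic a b : a != 0 -> a != -1 -> b ^+ 2 = (hE t).[a] ->
  (forall x, root (fiber_poly a) x -> f2 x != 0) ->
  fiber_card onC (fmap m.+1) (Some (a, b)) n.
Proof.
move=> a_neq0 a_neqN1 Eab f2_neq0.
have [rs [uniq_rs size_rs rootE]] :=
  separable_uniq_roots (separable_fiber_poly a_neq0 a_neqN1).
rewrite size_fiber_poly /= in size_rs; rewrite -size_rs.
apply: (@fiber_card_graph _ _ _ _ rs (fun x => b / f2 x)) => // -[[x y]|]; last first.
  by split => [[_ //]|[x _ //]].
split.
- case=> Cxy; rewrite fmap_Some; case: ifP => // /negbT jx_neq0 [f1x f2xy].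
  have ax : root (fiber_poly a) x by rewrite root_fiber_poly -f1x /f1 divfK ?expf_neq0.
  by exists x; rewrite -?rootE // -f2xy mulrC mulKf ?f2_neq0.
- case=> z; rewrite -rootE => az [-> ->].
  have jz_neq0 := fiber_poly_root_jpol_neq0 a_neq0 az.
  have f1z := f1_fiber_poly_root a_neq0 az.
  have f2z_neq0 := f2_neq0 _ az.
  split; last by rewrite fmap_Some (negbTE jz_neq0) f1z mulrC divfK.
  rewrite /= expr_div_n Eab -f1z -f2_sqr_hC // (mulrC (f2 z ^+ 2)) mulfK //.
  by rewrite expf_neq0.
Qed.

Definition sqrt_hC (x : F) := sqrtC (hC m.+1 t).[x].

Lemma on_hyp_sqrt_hC x : onC (Some (x, sqrt_hC x)) /\ onC (Some (x, - sqrt_hC x)).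
Proof. by rewrite /= sqrrN sqrtCK. Qed.

Lemma on_hyp_Some {x y} : onC (Some (x, y)) -> y = sqrt_hC x \/ y = - sqrt_hC x.
Proof.
rewrite /= -[in X in X -> _](sqrtCK (hC m.+1 t).[x]) => /eqP.
by rewrite eqf_sqr => /orP [] /eqP; [left|right].
Qed.

Lemma fiber_card_infinity : fiber_card onC (fmap m.+1) None n.
Proof.
have [rs [uniq_rs size_rs rootE]] := separable_uniq_roots (separable_jpol F m).
rewrite size_jpol /= in size_rs.
rewrite (_ : n = 1 + 2 * size rs)%N; last by rewrite size_rs; lia.
apply: (@fiber_card_pairs _ _ _ _ None rs sqrt_hC) => //.
- move=> x; rewrite -rootE /root => /eqP jx0.
  have x_neq0 : x != 0.
    by apply/eqP => x0; move: (horner_jpol0_neq0 F m); rewrite -{1}x0 jx0 eqxx.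
  have x_neqN1 : x + 1 != 0.
    rewrite addr_eq0; apply/eqP => x1.
    by move: jx0; rewrite x1 horner_jpol_N1; apply/eqP/oner_neq0.
  by rewrite sqrtC_eq0 horner_hC jx0 expr0n mulr0 addr0 !mulf_neq0 ?expf_neq0.
- move=> [[x y]|]; last by split => // _; left.
  rewrite fmap_Some; split.
  + case=> Cxy; case: ifP => // /eqP jx0 _; right; exists x; first by rewrite -rootE /root jx0.
    by case: (on_hyp_Some Cxy) => ->; [left|right].
  + case=> // -[z]; rewrite -rootE /root => /eqP jz0.
    by case=> -[-> ->]; rewrite jz0 eqxx; case: (on_hyp_sqrt_hC z).
Qed.

Lemma fiber_card_N1 : fiber_card onC (fmap m.+1) (Some (-1, 0)) n.
Proof.
have [rs [uniq_rs size_rs rootE]] := separable_uniq_roots (separable_kpol F m).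
rewrite size_kpol /= in size_rs.
rewrite (_ : n = 1 + 2 * size rs)%N; last by rewrite size_rs; lia.
have jN1_neq0 : j.[-1] != 0 by rewrite horner_jpol_N1 oner_eq0.
apply: (@fiber_card_pairs _ _ _ _ (Some (-1, 0)) rs sqrt_hC) => //.
- move=> x; rewrite -rootE /root => /eqP kx0; have [x0 x1 jx0 xn] := kpol_root_facts F m kx0.
  rewrite sqrtC_eq0 horner_hC xn !mulf_neq0 ?addr_eq0 //.
  by rewrite eqr_opp -[X in X != _]mul1r (inj_eq (mulIf (expf_neq0 2 jx0))) eq_sym.
- move=> x; rewrite -rootE /root => /eqP kx0; have [_ x1 _ _] := kpol_root_facts F m kx0.
  by split=> -[x1']; move: x1; rewrite x1' eqxx.
- move=> [[x y]|]; last by split => [[_ //]|[//|[x _ [//|//]]]].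
  rewrite fmap_Some; split.
  + case=> Cxy; case: ifP => // /negbT jx0 [f1x f2xy].
    have xn : x ^+ n = - j.[x] ^+ 2.
      move: f1x => /(congr1 (fun z => z * j.[x] ^+ 2)).
      by rewrite /f1 divfK ?expf_neq0 // mulN1r.
    have : (x + 1) * k.[x] ^+ 2 == 0 by rewrite -horner_norm_jpol_kpol xn addNr.
    rewrite mulf_eq0 expf_eq0 /= addr_eq0 => /orP [/eqP x1|/eqP kx0].
    * left; move: Cxy; rewrite /= horner_hC x1 addNr mulr0 mul0r => /eqP.
      by rewrite expf_eq0 /= => /eqP ->.
    * right; exists x; first by rewrite -rootE /root kx0.
      by case: (on_hyp_Some Cxy) => ->; [left|right].
  + case=> [[-> ->]|[z]].
    * split; first by rewrite /= horner_hC addNr mulr0 mul0r expr0n.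
      by rewrite (negbTE jN1_neq0) mulr0 /f1 horner_jpol_N1 expr1n divr1 -signr_odd /= oddM.
    * rewrite -rootE /root => /eqP kz0; have [z0 z1 jz0 zn] := kpol_root_facts F m kz0.
      have f1z : f1 z = -1 by rewrite /f1 zn mulNr divff // expf_neq0.
      have f2z : f2 z = 0 by rewrite /f2 kz0 mulr0 mul0r.
      by case=> -[-> ->]; rewrite (negbTE jz0) f1z f2z mul0r; case: (on_hyp_sqrt_hC z).
Qed.

Lemma fiber_card_origin : fiber_card onC (fmap m.+1) (Some (0, 0)) 1.
Proof.
apply: (@fiber_card_graph _ _ _ _ [:: 0] (fun _ => 0)) => // -[[x y]|]; last first.
  by split => [[_ //]|[x _ //]].
rewrite fmap_Some; split.
- case=> Cxy; case: ifP => // /negbT jx0 [f1x _].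
  have x0 : x = 0.
    move: f1x; rewrite /f1 => /eqP.
    rewrite mulf_eq0 invr_eq0 !expf_eq0 (negbTE jx0) andbF orbF.
    by case/andP => _ /eqP.
  move: Cxy; rewrite /= x0 horner_hC !mul0r => /eqP; rewrite expf_eq0 /= => /eqP ->.
  by exists 0; rewrite ?inE.
- case=> z; rewrite inE => /eqP -> [-> ->]; split; first by rewrite /= horner_hC !mul0r expr0n.
  by rewrite (negbTE (horner_jpol0_neq0 F m)) mulr0 /f1 expr0n /= mul0r.
Qed.

Lemma f2_neq0_above_Nt x : root (fiber_poly (- t)) x -> f2 x != 0.
Proof.
move=> Ntx; have Nt_neq0 : - t != 0 by rewrite oppr_eq0.
have jx_neq0 := fiber_poly_root_jpol_neq0 Nt_neq0 Ntx.
move: Ntx; rewrite root_fiber_poly => /eqP xn.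
have x_neq0 : x != 0.
  apply: contra jx_neq0 => /eqP x0; move: xn; rewrite x0 expr0n /= => /esym/eqP.
  by rewrite mulf_eq0 oppr_eq0 (negbTE t_neq0) expf_eq0.
have kx_neq0 : k.[x] != 0.
  apply/eqP => kx0; move: (horner_norm_jpol_kpol F m x).
  rewrite kx0 expr0n mulr0 xn -{2}[j.[x] ^+ 2]mul1r -mulrDl => /eqP.
  rewrite mulf_eq0 expf_eq0 (negbTE jx_neq0) andbF orbF addrC subr_eq0 eq_sym.
  by rewrite (negbTE t_neq1).
by rewrite /f2 !mulf_neq0 ?invr_eq0 ?expf_neq0.
Qed.

Lemma fiber_card_affine a b : b ^+ 2 = (hE t).[a] -> (a, b) != (0, 0) ->
  fiber_card onC (fmap m.+1) (Some (a, b)) n.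
Proof.
move=> Eab ab_neq0.
have b0_of_root : b ^+ 2 = 0 -> b = 0 by move/eqP; rewrite expf_eq0 => /eqP.
have [a0|a_neq0] := eqVneq a 0.
  by move: Eab ab_neq0; rewrite a0 horner_hE !mul0r => /b0_of_root ->; rewrite eqxx.
have [a1|a_neqN1] := eqVneq a (-1).
  by move: Eab; rewrite a1 horner_hE addNr mulr0 mul0r => /b0_of_root ->; exact: fiber_card_N1.
apply: fiber_card_generic => // x ax.
have [aNt|a_neqNt] := eqVneq a (- t); first by move: ax; rewrite aNt; exact: f2_neq0_above_Nt.
have jx_neq0 := fiber_poly_root_jpol_neq0 a_neq0 ax.
apply/eqP => f2x0; move: (f2_sqr_hC jx_neq0).
rewrite f2x0 expr0n mul0r (f1_fiber_poly_root a_neq0 ax) -Eab => /esym/b0_of_root b0.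
move: Eab; rewrite b0 expr0n horner_hE => /esym/eqP.
by rewrite !mulf_eq0 (negbTE a_neq0) !addr_eq0 (negbTE a_neqN1) (negbTE a_neqNt).
Qed.

Lemma separable_hC : separable_poly (hC m.+1 t).
Proof.
have -> : hC m.+1 t = fiber_poly (- t) * ('X - 0%:P) * ('X - (-1)%:P).
  by rewrite hCE /fiber_poly polyC0 subr0 !polyCN mulNr !opprK polyC1; ring.
rewrite !separable_root separable_fiber_poly ?oppr_eq0 ?eqr_opp //.
rewrite rootM !root_XsubC !root_fiber_poly expr0n /= eq_sym mulf_eq0 oppr_eq0.
rewrite (negbTE t_neq0) expf_eq0 (negbTE (horner_jpol0_neq0 F m)) andbF /=.
rewrite oppr_eq0 oner_eq0 horner_jpol_N1 expr1n mulr1 -signr_odd /= oddM /=.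
by rewrite eqr_opp eq_sym (negbTE t_neq1).
Qed.

Lemma size_hC : size (hC m.+1 t) = (2 * m.+1 + 2)%N.
Proof.
have fiberE : 'X ^+ n + t%:P * j ^+ 2 = fiber_poly (- t).
  by rewrite /fiber_poly polyCN mulNr opprK.
have X_neq0 : ('X : {poly F}) != 0 by rewrite polyX_eq0.
have X1_neq0 : ('X + 1 : {poly F}) != 0 by rewrite -size_poly_eq0 size_X1.
have fiber_neq0 : fiber_poly (- t) != 0 by rewrite -size_poly_eq0 size_fiber_poly.
rewrite hCE fiberE !size_mul ?mulf_neq0 // size_polyX size_X1 size_fiber_poly /=.
by lia.
Qed.

Lemma fiber_card_off_origin Q : onE Q -> Q <> Some (0, 0) ->
  fiber_card onC (fmap m.+1) Q n.
Proof.
case: Q => [[a b]|] Eab ab_neq0; last exact: fiber_card_infinity.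
by apply: fiber_card_affine => //; apply/eqP => ab0; apply: ab_neq0; rewrite ab0.
Qed.

Lemma has_degree_fmap : has_degree onC onE (fmap m.+1) n.
Proof.
exists [:: Some (0, 0)] => Q EQ; rewrite inE => /eqP Q_neq0.
exact: fiber_card_off_origin.
Qed.

End Curve.

Theorem theorem3p2 (R : realType) (g : nat) (t : R[i]) :
  (1 <= g)%N -> t != 0 -> t != -1 -> t != 1 ->
  [/\ separable_poly (hC g t) /\ size (hC g t) = (2 * g + 2)%N,
      (forall P, on_hyp (hC g t) P -> on_hyp (hE t) (fmap g P)),
      has_degree (on_hyp (hC g t)) (on_hyp (hE t)) (fmap g) (2 * g - 1),
      totally_ramified_above (on_hyp (hC g t)) (fmap g) (Some (0, 0))
    & forall Q, on_hyp (hE t) Q -> Q <> Some (0, 0) ->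
        unramified_above (on_hyp (hC g t)) (fmap g) (2 * g - 1) Q].
Proof.
case: g => [//|m] _ t_neq0 _ t_neq1.
rewrite (_ : 2 * m.+1 - 1 = (2 * m).+1)%N; last by lia.
split.
- by split; [exact: separable_hC | exact: size_hC].
- exact: fmap_on_hyp.
- exact: has_degree_fmap.
- exact: fiber_card_origin.
- exact: fiber_card_off_origin.
Qed.
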